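(* Let $S$ be an intra-regular $\Gamma$-AG$^{**}$-groupoid and $A\subseteq S$ nonempty. Then $A$ is a $\Gamma$-$(1,2)$-ideal of $S$ if and only if $(A\Gamma S)\Gamma (A\Gamma A)=A$ and $A\Gamma A=A$.
   Context: Let $S$ and $\Gamma$ be nonempty sets with a map $S\times\Gamma\times S\to S$, $(x,\gamma,y)\mapsto x\gamma y$. $S$ is a $\Gamma$-AG-groupoid if $(x\gamma y)\delta z=(z\gamma y)\delta x$ for all $x,y,z\in S$, $\gamma,\delta\in\Gamma$; it is a $\Gamma$-AG$^{**}$-groupoid if moreover $a\alpha(b\beta c)=b\alpha(a\beta c)$ for all $a,b,c\in S$, $\alpha,\beta\in\Gamma$. For subsets $A,B\subseteq S$, $A\Gamma B=\{a\gamma b: a\in A,\gamma\in\Gamma,b\in B\}$. $S$ is intra-regular if for every $a\in S$ there exist $x,y\in S$ and $\beta,\gamma,\delta\in\Gamma$ with $a=(x\beta(a\delta a))\gamma y$. A nonempty subset $A$ is a $\Gamma$-$(1,2)$-ideal if $A\Gamma A\subseteq A$ and $(A\Gamma S)\Gamma(A\Gamma A)\subseteq A$. *)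

From Stdlib Require Import Classical.

Definition subset {S : Type} (A B : S -> Prop) : Prop := forall x, A x -> B x.

Definition set_eq {S : Type} (A B : S -> Prop) : Prop := subset A B /\ subset B A.

Definition gprod {S G : Type} (op : S -> G -> S -> S) (A B : S -> Prop) : S -> Prop :=
  fun z => exists a g b, A a /\ B b /\ z = op a g b.

Definition fullset {S : Type} : S -> Prop := fun _ => True.

Definition is_GammaAG {S G : Type} (op : S -> G -> S -> S) : Prop :=
  forall (x y z : S) (g d : G), op (op x g y) d z = op (op z g y) d x.

Definition is_GammaAGss {S G : Type} (op : S -> G -> S -> S) : Prop :=
  is_GammaAG op /\
  forall (a b c : S) (al be : G), op a al (op b be c) = op b al (op a be c).

Definition intra_regular {S G : Type} (op : S -> G -> S -> S) : Prop :=
  forall a : S, exists (x y : S) (be ga de : G),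
    a = op (op x be (op a de a)) ga y.

Definition is_Gamma12_ideal {S G : Type} (op : S -> G -> S -> S) (A : S -> Prop) : Prop :=
  (exists a, A a) /\
  subset (gprod op A A) A /\
  subset (gprod op (gprod op A fullset) (gprod op A A)) A.

(* Intra-regularity lets every a be rewritten, using only the left invertive
   and left permutable laws, as a = (a δ s) γ (a δ a) for some s, δ, γ; hence
   every subset A lies in (AΓS)Γ(AΓA).  Rewriting this once more gives
   a = ((a ε (s δ s)) δ (a γ (a ε a))) γ a, whose left factor lies in
   (AΓS)Γ(AΓA) as soon as AΓA ⊆ A; so a (1,2)-ideal also satisfies A ⊆ AΓA. *)

Section IntraRegularAGss.

Variables (S G : Type) (op : S -> G -> S -> S).

Local Notation "x ·[ g ] y" := (op x g y) (at level 40, left associativity).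

Hypothesis left_invertive :
  forall (x y z : S) (g d : G), (x ·[g] y) ·[d] z = (z ·[g] y) ·[d] x.
Hypothesis left_permutable :
  forall (a b c : S) (al be : G), a ·[al] (b ·[be] c) = b ·[al] (a ·[be] c).

Lemma intra_regular_repr :
  intra_regular op ->
  forall a : S, exists (s : S) (d c : G), a = (a ·[d] s) ·[c] (a ·[d] a).
Proof.
  intros Hir a.
  destruct (Hir a) as [x [y [b [c [d E]]]]].
  exists (((y ·[b] x) ·[b] x) ·[c] y), d, c.
  set (t := a ·[d] a) in E |- *.
  transitivity ((x ·[b] t) ·[c] y); [exact E|].
  transitivity ((x ·[b] (a ·[d] ((x ·[b] t) ·[c] y))) ·[c] y).
  { unfold t at 1; congruence. }
  rewrite (left_permutable a (x ·[b] t) y d c).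
  rewrite (left_permutable x (x ·[b] t) (a ·[c] y) b d).
  rewrite (left_invertive x t (x ·[d] (a ·[c] y)) b b).
  rewrite (left_invertive ((x ·[d] (a ·[c] y)) ·[b] t) x y b c).
  rewrite (left_invertive x (a ·[c] y) t d b).
  rewrite (left_permutable (y ·[b] x) ((t ·[d] (a ·[c] y))) x c b).
  rewrite (left_invertive t (a ·[c] y) ((y ·[b] x) ·[b] x) d c).
  rewrite (left_permutable ((y ·[b] x) ·[b] x) a y d c).
  reflexivity.
Qed.

Lemma repr_right_factor (a s : S) (d c : G) :
  a = (a ·[d] s) ·[c] (a ·[d] a) ->
  a = ((a ·[d] (s ·[d] s)) ·[d] (a ·[c] (a ·[d] a))) ·[c] a.
Proof.
  intro E.
  transitivity ((a ·[d] s) ·[c] (a ·[d] a)); [exact E|].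
  rewrite (left_invertive a s (a ·[d] a) d c).
  transitivity (((((a ·[d] s) ·[c] (a ·[d] a)) ·[d] a) ·[d] s) ·[c] a).
  { rewrite <- E; reflexivity. }
  rewrite (left_invertive (a ·[d] s) (a ·[d] a) a c d).
  rewrite (left_invertive (a ·[c] (a ·[d] a)) (a ·[d] s) s d d).
  rewrite (left_permutable s a s d d).
  reflexivity.
Qed.

Hypothesis Hir : intra_regular op.

Lemma subset_gprod_AS_AA (A : S -> Prop) :
  subset A (gprod op (gprod op A fullset) (gprod op A A)).
Proof.
  intros a Ha.
  destruct (intra_regular_repr Hir a) as [s [d [c E]]].
  exists (a ·[d] s), c, (a ·[d] a).
  split; [exists a, d, s; repeat split; auto|].
  split; [exists a, d, a; auto | exact E].
Qed.

Lemma subset_gprod_AA (A : S -> Prop) :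
  subset (gprod op A A) A ->
  subset (gprod op (gprod op A fullset) (gprod op A A)) A ->
  subset A (gprod op A A).
Proof.
  intros HAA H12 a Ha.
  destruct (intra_regular_repr Hir a) as [s [d [c E]]].
  exists ((a ·[d] (s ·[d] s)) ·[d] (a ·[c] (a ·[d] a))), c, a.
  split; [|split; [exact Ha | exact (repr_right_factor a s d c E)]].
  apply H12.
  exists (a ·[d] (s ·[d] s)), d, (a ·[c] (a ·[d] a)).
  split; [exists a, d, (s ·[d] s); repeat split; auto|].
  split; [|reflexivity].
  exists a, c, (a ·[d] a).
  split; [exact Ha|split; [|reflexivity]].
  apply HAA. exists a, d, a. auto.
Qed.

End IntraRegularAGss.

Theorem mainTheorem6 (S G : Type) (op : S -> G -> S -> S)
  (HS : inhabited S) (HG : inhabited G)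
  (Hag : is_GammaAGss op) (Hir : intra_regular op)
  (A : S -> Prop) (HA : exists a, A a) :
  is_Gamma12_ideal op A <->
  (set_eq (gprod op (gprod op A fullset) (gprod op A A)) A /\
   set_eq (gprod op A A) A).
Proof.
  destruct Hag as [Hinv Hperm].
  split.
  - intros [_ [HAA H12]].
    split; split; try assumption.
    + exact (subset_gprod_AS_AA S G op Hinv Hperm Hir A).
    + exact (subset_gprod_AA S G op Hinv Hperm Hir A HAA H12).
  - intros [[H12 _] [HAA _]].
    exact (conj HA (conj HAA H12)).
Qed.
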